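(* Let $\mathbb{F}$ be any field and $\mathcal{H}=(Q_0,Q_1,\beta)$ a directed tensor-labeled hypergraph following a single standard construction. Then $\delta(\mathcal{H})=0$. In particular $\dim_{\mathbb{F}}\mathcal{Z}(\mathcal{H})=|Q_1|-|V_{\mathrm{macro}}|+c_{\mathrm{macro}}$.
   Context: $Q_0,Q_1$ finite; $T(\mathbb{F}^{Q_0})=\bigoplus_{k\ge0}(\mathbb{F}^{Q_0})^{\otimes k}$, with $v\in Q_0$ identified with $\mathbf{1}_v$ and $1$ the unit of $T^0=\mathbb{F}$. A directed tensor-labeled hypergraph is $\mathcal{H}=(Q_0,Q_1,\beta)$ with $\beta:\mathbb{F}^{Q_1}\to T(\mathbb{F}^{Q_0})\times T(\mathbb{F}^{Q_0})$ linear, $\beta(\mathbf{1}_e)=(A_e,B_e)$. $\partial_\beta:\mathbb{F}^{Q_1}\to T(\mathbb{F}^{Q_0})$, $\mathbf{1}_e\mapsto B_e-A_e$; $\mathcal{Z}(\mathcal{H})=\mathrm{Ker}\,\partial_\beta$. $V_{\mathrm{macro}}=\{A_e\}\cup\{B_e\}$; $\mathcal{H}_{\mathrm{macro}}$ is the directed multigraph on $V_{\mathrm{macro}}$ with edges $Q_1$, $e:A_e\to B_e$; $c_{\mathrm{macro}}$ its number of weakly connected components; $B_{\mathrm{macro}}:\mathbb{F}^{Q_1}\to\mathbb{F}^{V_{\mathrm{macro}}}$, $\mathbf{1}_e\mapsto\mathbf{1}_{B_e}-\mathbf{1}_{A_e}$; $\hat\phi:\mathbb{F}^{V_{\mathrm{macro}}}\to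 T(\mathbb{F}^{Q_0})$, $\mathbf{1}_w\mapsto w$; $\delta(\mathcal{H})=\dim(\mathrm{Im}B_{\mathrm{macro}}\cap\mathrm{Ker}\hat\phi)$. $\mathrm{Sym}_k(m_1\otimes\cdots\otimes m_k)=\sum_{\sigma\in S_k}m_{\sigma(1)}\otimes\cdots\otimes m_{\sigma(k)}$. Standard constructions: (1) $\psi:Q_1\to2^{Q_0}$, $1\le|\psi(e)|\le2$, $\beta(e)=(2(v\otimes v),1)$ if $\psi(e)=\{v\}$, $(u\otimes v+v\otimes u,1)$ if $\psi(e)=\{u,v\}$, $u\neq v$; (2) $s,t:Q_1\to Q_0$, $\beta(e)=(s(e),t(e))$; (3) multiset $\{\!\{u_1,\dots,u_k\}\!\}$, $k\ge1$, $\beta(e)=(\mathrm{Sym}_k(u_1\otimes\cdots\otimes u_k),1)$; (4) tuple $(u_1,\dots,u_k)$, $k\ge1$, $\beta(e)=(u_1\otimes\cdots\otimes u_k,1)$; (5) multisets of sizes $p,q\ge1$, $\beta(e)=(\mathrm{Sym}_p(u_1\otimes\cdots\otimes u_p),\mathrm{Sym}_q(v_1\otimes\cdots\otimes v_q))$; (6) tuples, $\beta(e)=(u_1\otimes\cdots\otimes u_p,w_1\otimes\cdots\otimes w_q)$, $p,q\ge1$. ''Single standard construction'': all hyperedges given by the same one of (1)–(6). *)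

From HB Require Import structures.
From mathcomp Require Import all_boot all_order all_algebra all_fingroup.
From mathcomp Require Import finmap.
From mathcomp Require Import monalg.

Set Implicit Arguments.
Unset Strict Implicit.
Unset Printing Implicit Defensive.

Import GRing.Theory.
Local Open Scope ring_scope.

(* T(F^{Q0}) = \bigoplus_k (F^{Q0})^{\otimes k}; the word [:: v1; ...; vk]
   is the basis tensor 1_{v1} \otimes ... \otimes 1_{vk}, the empty word is 1,
   and the algebra product is the tensor product. *)
Definition tensor (F : fieldType) (Q0 : finType) := {malg F[{fmonom Q0}]}.

Definition tv (F : fieldType) (Q0 : finType) (v : Q0) : tensor F Q0 :=
  << fmu v >>.

Definition Tprod (F : fieldType) (Q0 : finType) (s : seq Q0) : tensor F Q0 :=
  \prod_(u <- s) tv F u.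

Definition Sym (F : fieldType) (Q0 : finType) (s : seq Q0) : tensor F Q0 :=
  \sum_(sigma : 'S_(size s)) \prod_(i < size s) tv F (tnth (in_tuple s) (sigma i)).

(* A directed tensor-labeled hypergraph (Q0,Q1,beta) is given by the values
   beta(1_e) = (A_e, B_e) on the basis of F^{Q1} (beta is their linear
   extension). *)
Definition hgraph (F : fieldType) (Q0 Q1 : finType) :=
  Q1 -> tensor F Q0 * tensor F Q0.

Section Hypergraph.
Variables (F : fieldType) (Q0 Q1 : finType) (beta : hgraph F Q0 Q1).

Definition Ae e := (beta e).1.
Definition Be e := (beta e).2.

Definition dbeta (x : {ffun Q1 -> F^o}) : tensor F Q0 :=
  \sum_(e : Q1) (x e : F) *: (Be e - Ae e).

Definition inZ (x : {ffun Q1 -> F^o}) : Prop := dbeta x = 0.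

Definition Vseq : seq (tensor F Q0) :=
  undup ([seq Ae e | e <- enum Q1] ++ [seq Be e | e <- enum Q1]).

Definition Vmacro := seq_sub Vseq.

Lemma Ae_in e : Ae e \in Vseq.
Proof. by rewrite mem_undup mem_cat; apply/orP; left; apply: map_f; rewrite mem_enum. Qed.

Lemma Be_in e : Be e \in Vseq.
Proof. by rewrite mem_undup mem_cat; apply/orP; right; apply: map_f; rewrite mem_enum. Qed.

Definition msrc e : Vmacro := SeqSub (Ae_in e).
Definition mtgt e : Vmacro := SeqSub (Be_in e).

Definition madj : rel Vmacro := fun v w =>
  [exists e : Q1, ((msrc e == v) && (mtgt e == w)) || ((msrc e == w) && (mtgt e == v))].

Definition c_macro : nat := n_comp madj (@predT Vmacro).

Definition Bmacro (x : {ffun Q1 -> F^o}) : {ffun Vmacro -> F^o} :=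
  \sum_(e : Q1) (x e : F) *:
     ([ffun w => ((w == mtgt e)%:R : F^o)] - [ffun w => ((w == msrc e)%:R : F^o)]).

Definition phihat (y : {ffun Vmacro -> F^o}) : tensor F Q0 :=
  \sum_(w : Vmacro) (y w : F) *: ssval w.

End Hypergraph.

(* "the subspace described by P has dimension n": P is exactly the span of
   some free family of n vectors *)
Definition has_dim (F : fieldType) (V : vectType F) (P : V -> Prop) (n : nat) :=
  exists b : n.-tuple V, free b /\ forall x, x \in <<b>>%VS <-> P x.

Definition dimZ_is (F : fieldType) (Q0 Q1 : finType) (beta : hgraph F Q0 Q1) n :=
  has_dim (inZ beta) n.

Definition delta_is (F : fieldType) (Q0 Q1 : finType) (beta : hgraph F Q0 Q1) n :=
  has_dim (fun y : {ffun Vmacro beta -> F^o} =>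
             (exists x, y = Bmacro beta x) /\ phihat y = 0) n.

Section Standard.
Variables (F : fieldType) (Q0 Q1 : finType) (beta : hgraph F Q0 Q1).

Definition std1 := exists psi : Q1 -> {set Q0}, forall e,
  (exists v, psi e = [set v] /\
     beta e = ((2%:R : F) *: (tv F v * tv F v), 1))
  \/ (exists u v, u != v /\ psi e = [set u; v] /\
     beta e = (tv F u * tv F v + tv F v * tv F u, 1)).

Definition std2 := exists s t : Q1 -> Q0, forall e,
  beta e = (tv F (s e), tv F (t e)).

(* (3) multisets of size k >= 1 (listed in any order) *)
Definition std3 := exists m : Q1 -> seq Q0, forall e,
  (0 < size (m e))%N /\ beta e = (Sym F (m e), 1).

Definition std4 := exists m : Q1 -> seq Q0, forall e,
  (0 < size (m e))%N /\ beta e = (Tprod F (m e), 1).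

Definition std5 := exists m1 m2 : Q1 -> seq Q0, forall e,
  (0 < size (m1 e))%N /\ (0 < size (m2 e))%N /\
  beta e = (Sym F (m1 e), Sym F (m2 e)).

Definition std6 := exists m1 m2 : Q1 -> seq Q0, forall e,
  (0 < size (m1 e))%N /\ (0 < size (m2 e))%N /\
  beta e = (Tprod F (m1 e), Tprod F (m2 e)).

Definition single_standard := std1 \/ std2 \/ std3 \/ std4 \/ std5 \/ std6.

End Standard.

(* B_macro maps F^{Q1} onto the vectors of F^{V_macro} whose sum over each
   weakly connected component of H_macro vanishes, so rank-nullity gives
   dim Ker B_macro = |Q1| - |V_macro| + c_macro.  As partial_beta is
   hat phi o B_macro, both claims follow once hat phi kills no nonzero vector
   of Im B_macro.  In every standard construction each label A_e, B_e is a
   word u_1 (x) ... (x) u_k or a symmetrisation Sym_k(u_1 (x) ... (x) u_k)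
   (constructions (1) and (2) are instances of (3) and (6)), and two such
   labels are either equal or have disjoint supports in the word basis of
   T(F^{Q0}).  Hence sum_w y_w w = 0 forces y_w = 0 for every nonzero label w;
   at most one label is zero (e.g. 2 v (x) v in characteristic 2), and its
   coefficient vanishes because the coordinates of a vector of Im B_macro
   sum to 0. *)

From Pilot Require Import Defs.
From HB Require Import structures.
From mathcomp Require Import all_boot all_order all_algebra all_fingroup.
From mathcomp Require Import finmap monalg.
From mathcomp Require Import zify.
Import GRing.Theory.
Local Open Scope ring_scope.

Set Implicit Arguments.
Unset Strict Implicit.
Unset Printing Implicit Defensive.

Section UnitVectors.
Variables (F : fieldType) (I : finType).

Definition unitv (i : I) : {ffun I -> F^o} := [ffun j => (j == i)%:R].

Lemma sum_unitv (P : pred I) (a : I) : \sum_(i | P i) unitv a i = (P a)%:R.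
Proof.
rewrite big_mkcond (bigD1 a) //= ffunE eqxx big1 ?addr0 => [|i /negbTE neq];
  by [case: (P _) | rewrite ffunE neq; case: (P _)].
Qed.

Lemma sum_unitvZ (V : lmodType F) (a : I) (f : I -> V) :
  \sum_i unitv a i *: f i = f a.
Proof.
rewrite (bigD1 a) //= ffunE eqxx scale1r big1 ?addr0 // => i /negbTE neq.
by rewrite ffunE neq scale0r.
Qed.

Lemma ffun_unitvE (y : {ffun I -> F^o}) : y = \sum_i y i *: unitv i.
Proof.
apply/ffunP => j; rewrite sum_ffunE (bigD1 j) //= !ffunE eqxx [_ *: _]mulr1.
rewrite big1 ?addr0 // => i neq.
by rewrite !ffunE eq_sym (negbTE neq) [_ *: _]mulr0.
Qed.

End UnitVectors.

Section Incidence.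
Variables (F : fieldType) (Q1 W : finType) (s t : Q1 -> W).
Local Notation unitv := (@unitv F _).

Definition incidence (x : {ffun Q1 -> F^o}) : {ffun W -> F^o} :=
  \sum_e x e *: (unitv (t e) - unitv (s e)).

Fact incidence_is_linear : linear incidence.
Proof.
move=> a x y; rewrite /incidence scaler_sumr -big_split /=.
by apply: eq_bigr => e _; rewrite !ffunE scalerDl scalerA.
Qed.
HB.instance Definition _ := GRing.isLinear.Build F _ _ _ incidence incidence_is_linear.

Lemma incidenceE x w :
  incidence x w = \sum_e x e * (unitv (t e) w - unitv (s e) w).
Proof. by rewrite sum_ffunE; apply: eq_bigr => e _; rewrite !ffunE. Qed.

Lemma sum_incidence x : \sum_w incidence x w = 0.
Proof.
under eq_bigr => w _ do rewrite incidenceE.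
rewrite exchange_big big1 // => e _.
by rewrite -mulr_sumr sumrB !sum_unitv subrr mulr0.
Qed.

Lemma lincomb_incidence (V : lmodType F) (f : W -> V) x :
  \sum_w incidence x w *: f w = \sum_e x e *: (f (t e) - f (s e)).
Proof.
under eq_bigr => w _ do rewrite incidenceE scaler_suml.
rewrite exchange_big; apply: eq_bigr => e _.
under eq_bigr => w _ do rewrite -scalerA.
rewrite -scaler_sumr; under eq_bigr => w _ do rewrite scalerBl.
by rewrite sumrB !sum_unitvZ.
Qed.

Definition adj : rel W := fun v w =>
  [exists e, ((s e == v) && (t e == w)) || ((s e == w) && (t e == v))].

Lemma adj_sym : symmetric adj.
Proof. by move=> v w; apply: eq_existsb => e; rewrite orbC. Qed.

Local Notation root := (fingraph.root adj).

Lemma root_edge e : root (s e) = root (t e).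
Proof.
apply/(fingraph.rootP (sym_connect_sym adj_sym))/connect1/existsP.
by exists e; rewrite !eqxx.
Qed.

Definition comp := {r : W | r \in roots adj}.

Lemma card_comp : #|{: comp}| = n_comp adj predT.
Proof. by rewrite card_sig; apply: eq_card => r; rewrite !inE andbT. Qed.

Definition comp_sum (y : {ffun W -> F^o}) : {ffun comp -> F^o} :=
  [ffun r => \sum_(w | root w == val r) y w].

Fact comp_sum_is_linear : linear comp_sum.
Proof.
move=> a x y; apply/ffunP => r; rewrite !ffunE scaler_sumr -big_split /=.
by apply: eq_bigr => w _; rewrite !ffunE.
Qed.
HB.instance Definition _ := GRing.isLinear.Build F _ _ _ comp_sum comp_sum_is_linear.

Lemma comp_sum_incidence x : comp_sum (incidence x) = 0.
Proof.
apply/ffunP => r; rewrite !ffunE.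
under eq_bigr => w _ do rewrite incidenceE.
rewrite exchange_big big1 // => e _.
by rewrite -mulr_sumr sumrB !sum_unitv root_edge subrr mulr0.
Qed.

Local Notation B := (linfun incidence).

Lemma incidence_unitv e : incidence (unitv e) = unitv (t e) - unitv (s e).
Proof. exact: sum_unitvZ. Qed.

Lemma connect_unitv_img v w : connect adj v w -> unitv v - unitv w \in limg B.
Proof.
have edge_img e : unitv (t e) - unitv (s e) \in limg B.
  by rewrite -incidence_unitv -lfunE memv_img ?memvf.
case/connectP => p; elim: p v => [|u p IHp] v /=.
  by move=> _ ->; rewrite subrr mem0v.
case/andP => /existsP [e adj_e] /IHp u_w /u_w {}u_w.
rewrite -[_ - _](subrKA (unitv u)) memvD //.
by case/orP: adj_e => /andP [/eqP <- /eqP <-]; rewrite // -opprB memvN.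
Qed.

Lemma comp_sum_eq0 y : comp_sum y = 0 -> forall v, \sum_(w | root w == v) y w = 0.
Proof.
move=> y0 v; have [v_root|v_nroot] := boolP (v \in roots adj).
  have := congr1 (fun f : {ffun comp -> F^o} => f (exist _ v v_root)) y0.
  by rewrite !ffunE.
apply: big1 => w /eqP root_w; case/negP: v_nroot.
by rewrite -root_w inE (roots_root (sym_connect_sym adj_sym)).
Qed.

Lemma lker_comp_sum : lker (linfun comp_sum) = limg B.
Proof.
apply/eqP; rewrite eqEsubv; apply/andP; split; apply/subvP => y; last first.
  by case/memv_imgP => x _ ->; rewrite memv_ker !lfunE; apply/eqP/comp_sum_incidence.
rewrite memv_ker lfunE => /eqP /comp_sum_eq0 y0.
have root_part : \sum_w y w *: unitv (root w) = 0 :> {ffun W -> F^o}.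
  apply/ffunP => v; rewrite sum_ffunE ffunE -[RHS](y0 v) [RHS]big_mkcond.
  apply: eq_bigr => w _; rewrite !ffunE eq_sym.
  by case: eqP => _; rewrite ?[_ *: _]mulr1 ?[_ *: _]mulr0.
have -> : y = \sum_w y w *: (unitv w - unitv (root w)).
  by rewrite (eq_bigr _ (fun w _ => scalerBr _ _ _)) sumrB root_part subr0 -ffun_unitvE.
by apply: memv_suml => w _; apply/memvZ/connect_unitv_img/connect_root.
Qed.

Lemma comp_sum_unitv (r : comp) : comp_sum (unitv (val r)) = unitv r.
Proof.
apply/ffunP => r'; rewrite ffunE sum_unitv (eqP (valP r)) [RHS]ffunE.
by rewrite eq_sym -val_eqE.
Qed.

Lemma limg_comp_sum : limg (linfun comp_sum) = fullv.
Proof.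
apply/eqP; rewrite eqEsubv subvf; apply/subvP => z _.
rewrite (ffun_unitvE z); apply: memv_suml => r _; apply: memvZ.
by rewrite -comp_sum_unitv -lfunE memv_img ?memvf.
Qed.

Lemma dim_lker_incidence : (\dim (lker B) + #|W| = #|Q1| + n_comp adj predT)%N.
Proof.
have rank_B := limg_ker_dim B fullv.
have rank_S := limg_ker_dim (linfun comp_sum) fullv.
rewrite capfv dimvf /dim /= muln1 in rank_B.
rewrite lker_comp_sum capfv limg_comp_sum !dimvf /dim /= !muln1 card_comp in rank_S.
by rewrite -rank_B -rank_S addnA.
Qed.

End Incidence.

Section SupportSeparated.
Variables (R : idomainType) (K : choiceType).

Definition support_separated (P : {malg R[K]} -> Prop) :=
  forall a b k, P a -> P b -> a@_k != 0 -> b@_k != 0 -> a = b.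

Variables (I : finType) (P : {malg R[K]} -> Prop) (label : I -> {malg R[K]}).
Hypotheses (P_sep : support_separated P) (P_label : forall i, P (label i)).
Hypothesis label_inj : injective label.

Lemma lincomb_separated_eq0 (y : I -> R) :
  \sum_i y i = 0 -> \sum_i y i *: label i = 0 -> forall i, y i = 0.
Proof.
move=> sum_y0 lincomb0.
have y_nz_label i : label i != 0 -> y i = 0.
  move=> nz_i; have : msupp (label i) != fset0.
    apply: contra nz_i => /eqP supp0; apply/eqP/malgP => k.
    by apply/eqP; rewrite mcoeff0 mcoeff_eq0 supp0 in_fset0.
  case/fset0Pn => k; rewrite -mcoeff_neq0 => label_ik.
  have := congr1 (mcoeff k) lincomb0; rewrite raddf_sum /= (bigD1 i) //= big1.
    rewrite addr0 mcoeff0 mcoeffZ => /eqP.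
    by rewrite mulf_eq0 (negbTE label_ik) orbF => /eqP.
  move=> j j_neq; rewrite mcoeffZ.
  have [->|label_jk] := eqVneq (label j)@_k 0; first exact: mulr0.
  by case/negP: j_neq; apply/eqP/label_inj/(P_sep (P_label j) (P_label i) label_jk label_ik).
move=> i; have [/y_nz_label //|/negPn/eqP label_i0] := boolP (label i != 0).
move: sum_y0; rewrite (bigD1 i) //= big1 ?addr0 // => j j_neq; apply: y_nz_label.
by apply: contra j_neq => /eqP label_j0; apply/eqP/label_inj; rewrite label_j0.
Qed.

End SupportSeparated.

Section Words.
Variables (F : fieldType) (Q0 : finType).
Local Notation tensor := (tensor F Q0).
Local Notation Sym := (Defs.Sym F).

Lemma TprodE (s : seq Q0) : Tprod F s = << FMonom s >>.
Proof.
elim: s => [|u s IH]; first by rewrite /Tprod big_nil -fmoneE.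
rewrite /Tprod big_cons -/(Tprod F s) IH /tv malgM_def fgmulUU mulr1.
by congr << _ >>; apply: val_inj; rewrite /= fmM fmU.
Qed.

Lemma Sym_tuple n (u : n.-tuple Q0) :
  Sym u = \sum_(p : 'S_n) \prod_(i < n) tv F (tnth u (p i)).
Proof.
case: u => s hs; have e := eqP hs; move: hs; case: n / e => hs.
by rewrite (_ : Tuple hs = in_tuple s) //; apply: val_inj.
Qed.

Lemma Sym_permuted n (u : n.-tuple Q0) (p : 'S_n) :
  Sym [tuple tnth u (p i) | i < n] = Sym u.
Proof.
rewrite !Sym_tuple [RHS](reindex_inj (mulIg p)) /=.
by apply: eq_bigr => q _; apply: eq_bigr => i _; rewrite tnth_mktuple permM.
Qed.

Lemma Sym_perm_eq (s s' : seq Q0) : perm_eq s s' -> Sym s = Sym s'.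
Proof.
move=> /(tuple_permP (t := in_tuple s')) [p ->].
exact: Sym_permuted.
Qed.

Lemma SymE (s : seq Q0) :
  Sym s = \sum_(p : 'S_(size s)) Tprod F [tuple tnth (in_tuple s) (p i) | i < size s].
Proof.
by apply: eq_bigr => p _; rewrite /Tprod big_map val_ord_tuple enumT unlock.
Qed.

Lemma Sym_coeff_perm_eq (s : seq Q0) (m : {fmonom Q0}) :
  (Sym s)@_m != 0 -> perm_eq m s.
Proof.
apply: contraNT => not_perm; rewrite SymE raddf_sum /= big1 // => p _.
rewrite TprodE mcoeffU1; case: eqP => // eq_m; case/negP: not_perm.
by rewrite -eq_m /=; apply/(tuple_permP (t := in_tuple s)); exists p.
Qed.

Lemma ord2_cases (i : 'I_2) : i = ord0 \/ i = ord_max.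
Proof. by case: i => [[|[|//]]] ?; [left | right]; apply: val_inj. Qed.

Lemma perm2_cases (p : 'S_2) : p = 1%g \/ p = tperm ord0 ord_max.
Proof.
have p_neq : p ord0 != p ord_max by rewrite (inj_eq perm_inj).
have [p0|p0] := ord2_cases (p ord0); [left | right]; apply/permP => i;
  rewrite ?perm1 ?permE /=; have [->|->] := ord2_cases i => //=;
  by have [pm|pm] := ord2_cases (p ord_max); rewrite // p0 pm eqxx in p_neq.
Qed.

Lemma Sym_pair (u v : Q0) : Sym [:: u; v] = tv F u * tv F v + tv F v * tv F u.
Proof.
rewrite /Defs.Sym (bigD1 1%g) // (bigD1 (tperm ord0 ord_max)) //=.
rewrite [X in _ + (_ + X)]big1.
- by rewrite addr0 !big_ord_recl !big_ord0 !mulr1 !permE.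
- by move=> p; case: (perm2_cases p) => ->; rewrite eqxx ?andbF.
- by apply/eqP => /permP /(_ ord0) /(congr1 val); rewrite tpermL perm1.
Qed.

Lemma Tprod_nil : Tprod F [::] = 1 :> tensor.
Proof. exact: big_nil. Qed.

Lemma Sym_nil : Sym [::] = 1 :> tensor.
Proof.
rewrite /Defs.Sym (eq_bigr (fun _ => 1)) => [|p _]; last exact: big_ord0.
by rewrite sumr_const card_Sn.
Qed.

Definition is_word (a : tensor) := exists s, a = Tprod F s.
Definition is_sym (a : tensor) := exists s, a = Sym s.

Lemma word_separated : support_separated is_word.
Proof.
have word_coeff (s : seq Q0) (m : {fmonom Q0}) :
    (Tprod F s)@_m != 0 -> FMonom s = m.
  by rewrite TprodE mcoeffU1; have [//|_] := eqVneq (FMonom s) m; rewrite eqxx.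
move=> _ _ m [s ->] [s' ->] /word_coeff s_m /word_coeff s'_m.
by rewrite !TprodE s_m s'_m.
Qed.

Lemma sym_separated : support_separated is_sym.
Proof.
move=> _ _ m [s ->] [s' ->] /Sym_coeff_perm_eq m_s /Sym_coeff_perm_eq m_s'.
by apply: Sym_perm_eq; rewrite -(permPl m_s).
Qed.

End Words.

Section Hypergraph.
Variables (F : fieldType) (Q0 Q1 : finType) (beta : hgraph F Q0 Q1).
Local Notation s := (msrc beta).
Local Notation t := (mtgt beta).
Local Notation B := (linfun (@incidence F _ _ s t)).

Lemma Bmacro_incidence x : Bmacro beta x = incidence s t x.
Proof. by []. Qed.

Lemma phihat_Bmacro x : phihat (Bmacro beta x) = dbeta beta x.
Proof. exact: lincomb_incidence. Qed.

Lemma phihat0 : phihat (0 : {ffun Vmacro beta -> F^o}) = 0.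
Proof. by rewrite /phihat big1 // => w _; rewrite ffunE scale0r. Qed.

Variable P : tensor F Q0 -> Prop.
Hypothesis P_sep : support_separated P.
Hypothesis P_AB : forall e, P (Ae beta e) /\ P (Be beta e).

Lemma P_Vmacro (w : Vmacro beta) : P (ssval w).
Proof.
have := ssvalP w; rewrite mem_undup mem_cat.
by case/orP => /mapP [e _ ->]; case: (P_AB e).
Qed.

Lemma Bmacro_eq0 x : dbeta beta x = 0 -> Bmacro beta x = 0.
Proof.
rewrite -phihat_Bmacro => phihat0; apply/ffunP => w; rewrite ffunE.
exact: (lincomb_separated_eq0 P_sep P_Vmacro val_inj (sum_incidence s t x) phihat0).
Qed.

Lemma delta_is0 : delta_is beta 0.
Proof.
exists [tuple]; split; first exact: nil_free.
move=> y; rewrite span_nil memv0; split => [/eqP ->|[[x ->]]].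
  by split; [exists 0; rewrite Bmacro_incidence linear0 | exact: phihat0].
by rewrite phihat_Bmacro => /Bmacro_eq0 ->.
Qed.

Lemma dimZ_lker_incidence : dimZ_is beta (\dim (lker B)).
Proof.
exists (vbasis (lker B)); split; first exact: basis_free (vbasisP _).
move=> x; rewrite (span_basis (vbasisP _)) memv_ker lfunE /= -Bmacro_incidence /inZ.
split => [/eqP Bx0|/Bmacro_eq0 -> //].
by rewrite -phihat_Bmacro Bx0 phihat0.
Qed.

End Hypergraph.

Section Standard.
Variables (F : fieldType) (Q0 Q1 : finType) (beta : hgraph F Q0 Q1).

Lemma std1_std3 : std1 beta -> std3 beta.
Proof.
case=> psi std_e.
have std3_e e : exists m : seq Q0, (0 < size m)%N /\ beta e = (Defs.Sym F m, 1).
  case: (std_e e) => [[v [_ ->]]|[u [v [_ [_ ->]]]]];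
    [exists [:: v; v] | exists [:: u; v]]; split => //; rewrite Sym_pair //.
  by rewrite scaler_nat mulr2n.
exact: fin_all_exists std3_e.
Qed.

Lemma std2_std6 : std2 beta -> std6 beta.
Proof.
case=> s [t std_e]; exists (fun e => [:: s e]), (fun e => [:: t e]) => e.
by rewrite std_e /Tprod !big_seq1.
Qed.

Lemma single_standard_labels : single_standard beta ->
  (forall e, is_word (Ae beta e) /\ is_word (Be beta e)) \/
  (forall e, is_sym (Ae beta e) /\ is_sym (Be beta e)).
Proof.
have word1 : is_word (1 : tensor F Q0) by exists [::]; rewrite Tprod_nil.
have sym1 : is_sym (1 : tensor F Q0) by exists [::]; rewrite Sym_nil.
rewrite /Ae /Be.
case=> [/std1_std3|[/std2_std6|[|[|[]]]]].
- by case=> m std_e; right => e; have [_ ->] := std_e e; split => //; exists (m e).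
- case=> m1 [m2 std_e]; left => e; have [_ [_ ->]] := std_e e.
  by split; [exists (m1 e) | exists (m2 e)].
- by case=> m std_e; right => e; have [_ ->] := std_e e; split => //; exists (m e).
- by case=> m std_e; left => e; have [_ ->] := std_e e; split => //; exists (m e).
- case=> m1 [m2 std_e]; right => e; have [_ [_ ->]] := std_e e.
  by split; [exists (m1 e) | exists (m2 e)].
- case=> m1 [m2 std_e]; left => e; have [_ [_ ->]] := std_e e.
  by split; [exists (m1 e) | exists (m2 e)].
Qed.

End Standard.

Theorem theorem4p3 (F : fieldType) (Q0 Q1 : finType) (beta : hgraph F Q0 Q1) :
  single_standard beta ->
  delta_is beta 0 /\
  exists n : nat, dimZ_is beta n /\
    (n%:Z = (#|Q1|)%:Z - (#|{: Vmacro beta}|)%:Z + (c_macro beta)%:Z)%R.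
Proof.
move=> std.
have [P [P_sep P_AB]] : exists P, support_separated P /\
    forall e, P (Ae beta e) /\ P (Be beta e).
  case: (single_standard_labels std) => labels.
    by exists (@is_word F Q0); split; [exact: word_separated | exact: labels].
  by exists (@is_sym F Q0); split; [exact: sym_separated | exact: labels].
split; first exact: delta_is0 P_sep P_AB.
pose B := linfun (@incidence F _ _ (msrc beta) (mtgt beta)).
exists (\dim (lker B)); split; first exact: dimZ_lker_incidence P_sep P_AB.
have : (\dim (lker B) + #|{: Vmacro beta}| = #|Q1| + c_macro beta)%N.
  exact: dim_lker_incidence.
lia.
Qed.
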